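(* Let $F$ be a field and $\{E_1,\ldots,E_k\}$ a complete symmetric orthogonal set of idempotents in $F_{n\times n}$. Let $L=(\sigma(r,s))_{1\le r,s\le k}$ be a $k\times k$ array with entries in $\{1,\ldots,k\}$ such that each row and each column of $L$ contains each index exactly once. For each $(r,s)$ let $m_{r,s}$ be a monomial (product of non-negative powers, coefficient $1$) in a set of commuting variables $\mathbf{z}$; the same variable set is used throughout but the monomials may differ. Let $W$ be the $nk\times nk$ block matrix whose $(r,s)$ block is $m_{r,s}E_{\sigma(r,s)}$. Then $W$ is a paraunitary matrix in the variables $\mathbf{z}$, i.e. $WW^*=I_{nk}$.
   Context: For matrices over $\mathbb{C}$, $^*$ is conjugate transpose; otherwise transpose; on polynomial matrices $^*$ additionally replaces each variable $z$ by $z^{-1}$. A complete symmetric orthogonal set of idempotents is $\{E_1,\ldots,E_k\}$ with $E_i\ne0$, $E_i^2=E_i$, $E_iE_j=0$ ($i\ne j$), $\sum_iE_i=I_n$, $E_i^*=E_i$. *)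

From HB Require Import structures.
From mathcomp Require Import all_boot all_order all_algebra.
From mathcomp Require Import fraction.
From mathcomp Require Export mpoly.
Set Implicit Arguments. Unset Strict Implicit. Unset Printing Implicit Defensive.
Import GRing.Theory.
Local Open Scope ring_scope.

(* The ring of polynomials in d commuting variables z_0..z_{d-1} over F is
   {mpoly F[d]}; Laurent polynomials (needed to express z |-> z^{-1}) live
   in its field of fractions. *)
Definition laurent (F : fieldType) (d : nat) := {fraction {mpoly F[d]}}.

(* The scalar involution underlying ^* : conj = id gives transpose (any field),
   conj = complex conjugation gives conjugate transpose (over C). *)
Definition field_involution (F : fieldType) (conj : {rmorphism F -> F}) :=
  involutive conj.

Definition cstar (F : fieldType) (conj : {rmorphism F -> F}) m n
  (A : 'M[F]_(m, n)) : 'M[F]_(n, m) := (map_mx conj A)^T.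

Definition pstar (F : fieldType) (conj : {rmorphism F -> F}) d
  (p : {mpoly F[d]}) : laurent F d :=
  mmap (fun c : F => tofrac (@mpolyC d F (conj c)))
       (fun i : 'I_d => (tofrac ('X_i : {mpoly F[d]}))^-1) p.

Definition pmxstar (F : fieldType) (conj : {rmorphism F -> F}) d m n
  (P : 'M[{mpoly F[d]}]_(m, n)) : 'M[laurent F d]_(n, m) :=
  (map_mx (@pstar F conj d) P)^T.

Definition paraunitary (F : fieldType) (conj : {rmorphism F -> F}) d m
  (W : 'M[{mpoly F[d]}]_m) : Prop :=
  map_mx (@tofrac _) W *m pmxstar conj W = 1%:M.

Definition complete_sym_orth_idem (F : fieldType) (conj : {rmorphism F -> F})
  n k (E : 'I_k -> 'M[F]_n) : Prop :=
  [/\ forall i, E i != 0,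
      forall i, E i *m E i = E i,
      forall i j, i != j -> E i *m E j = 0,
      \sum_(i < k) E i = 1%:M
    & forall i, cstar conj (E i) = E i].

Definition latin_square k (sigma : 'I_k -> 'I_k -> 'I_k) : Prop :=
  (forall r t, exists! s, sigma r s = t) /\ (forall s t, exists! r, sigma r s = t).

Definition blockW (F : fieldType) d n k (E : 'I_k -> 'M[F]_n)
  (sigma : 'I_k -> 'I_k -> 'I_k) (mon : 'I_k -> 'I_k -> 'X_{1..d}) :
  'M[{mpoly F[d]}]_(\sum_(r < k) n, \sum_(s < k) n) :=
  \mxblock_(r < k, s < k) ('X_[mon r s] *: map_mx (@mpolyC d F) (E (sigma r s))).

From HB Require Import structures.
From mathcomp Require Import all_boot all_order all_algebra.
From mathcomp Require Import fraction mpoly.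
Import GRing.Theory.
Local Open Scope ring_scope.

(* Block (r,t) of W W^* is the sum over s of
   m_{r,s} m_{t,s}^* E_{sigma(r,s)} E_{sigma(t,s)}^*.  Since E^* = E, the
   idempotents are orthogonal and sigma(., s) is injective, every term with
   r <> t vanishes; for r = t the monomials cancel (m m^* = 1) and, sigma(r, .)
   being a bijection, what remains is the sum of all the E_i, i.e. I_n. *)

Lemma map_mxblock (A B : Type) (f : A -> B) p q (p_ : 'I_p -> nat)
    (q_ : 'I_q -> nat) (B_ : forall i j, 'M[A]_(p_ i, q_ j)) :
  map_mx f (\mxblock_(i, j) B_ i j) = \mxblock_(i, j) map_mx f (B_ i j).
Proof. by apply/matrixP => i j; rewrite !mxE. Qed.

Lemma scalar_mxblock (R : pzSemiRingType) k n (a : R) :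
  (a%:M : 'M[R]_(\sum_(r < k) n))
    = \mxblock_(r < k, t < k) (if r == t then a%:M else 0 : 'M[R]_n).
Proof.
rewrite -(@mxdiagZ R k (fun _ => n)) /mxdiag; apply: eq_mxblock => r t.
by case: eqP => // _; rewrite conform_mx_id.
Qed.

Section LatinSquare.
Context {k : nat} {sigma : 'I_k -> 'I_k -> 'I_k}.
Hypothesis latin : latin_square sigma.

Lemma latin_row_inj r : injective (sigma r).
Proof.
move=> s1 s2 eq_s; have [s0 [_ uniq_s]] := latin.1 r (sigma r s2).
by rewrite -(uniq_s s1 eq_s) -(uniq_s s2 erefl).
Qed.

Lemma latin_col_inj s : injective (sigma^~ s).
Proof.
move=> r1 r2 eq_r; have [r0 [_ uniq_r]] := latin.2 s (sigma r2 s).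
by rewrite -(uniq_r r1 eq_r) -(uniq_r r2 erefl).
Qed.

End LatinSquare.

Lemma mpolyX_neq0 (R : nzRingType) d (i : 'I_d) : ('X_i : {mpoly R[d]}) != 0.
Proof.
apply/eqP => X0; have := mcoeffXU R i i.
by rewrite X0 mcoeff0 eqxx => /eqP; rewrite eq_sym oner_eq0.
Qed.

Section LaurentStar.
Variables (F : fieldType) (conj : {rmorphism F -> F}) (d : nat).
Local Notation T := (laurent F d).

Definition const_frac : {rmorphism F -> T} := @tofrac _ \o @mpolyC d F.

Definition inv_var (i : 'I_d) : T := (tofrac ('X_i : {mpoly F[d]}))^-1.

Lemma pstar_monomial (m : 'X_{1..d}) (c : F) :
  pstar conj ('X_[m] * c%:MP) = mmap1 inv_var m * const_frac (conj c).
Proof.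
change (pstar conj _) with (mmap (const_frac \o conj) inv_var ('X_[m] * c%:MP)).
by rewrite rmorphM /= mmapX mmapC.
Qed.

Lemma tofrac_mpolyX_mulV (m : 'X_{1..d}) :
  tofrac ('X_[m] : {mpoly F[d]}) * mmap1 inv_var m = 1.
Proof.
rewrite mpolyXE_id rmorph_prod /mmap1 -big_split /=.
apply: big1 => i _; rewrite rmorphXn -exprMn /inv_var mulfV ?expr1n //.
by rewrite tofrac_eq0 mpolyX_neq0.
Qed.

Lemma mul_monomial_mx_star (a b : 'X_{1..d}) n (A B : 'M[F]_n) :
  map_mx (@tofrac _) ('X_[a] *: map_mx (@mpolyC d F) A)
    *m (map_mx (@pstar F conj d) ('X_[b] *: map_mx (@mpolyC d F) B))^T
  = (tofrac ('X_[a] : {mpoly F[d]}) * mmap1 inv_var b)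
      *: map_mx const_frac (A *m cstar conj B).
Proof.
have -> : map_mx (@tofrac _) ('X_[a] *: map_mx (@mpolyC d F) A)
    = tofrac ('X_[a] : {mpoly F[d]}) *: map_mx const_frac A.
  by apply/matrixP => i j; rewrite !mxE rmorphM.
have -> : (map_mx (@pstar F conj d) ('X_[b] *: map_mx (@mpolyC d F) B))^T
    = mmap1 inv_var b *: map_mx const_frac (cstar conj B).
  by apply/matrixP => i j; rewrite !mxE pstar_monomial.
by rewrite -scalemxAr -scalemxAl scalerA mulrC map_mxM.
Qed.

End LaurentStar.

Theorem theorem15 (F : fieldType) (conj : {rmorphism F -> F})
  (d n k : nat) (E : 'I_k -> 'M[F]_n) (sigma : 'I_k -> 'I_k -> 'I_k)
  (mon : 'I_k -> 'I_k -> 'X_{1..d}) :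
  field_involution conj ->
  complete_sym_orth_idem conj E ->
  latin_square sigma ->
  paraunitary conj (blockW E sigma mon).
Proof.
move=> _ [_ E_idem E_orth E_sum E_sym] latin.
rewrite /paraunitary /pmxstar /blockW !map_mxblock tr_mxblock mul_mxblock.
rewrite scalar_mxblock; apply: eq_mxblock => r t.
under eq_bigr do rewrite mul_monomial_mx_star E_sym.
case: eqP => [<- | /eqP neq_rt].
  under eq_bigr do rewrite E_idem tofrac_mpolyX_mulV scale1r.
  rewrite -map_mx_sum.
  by rewrite -(reindex_inj (P := xpredT) (F := E) (latin_row_inj latin r)) E_sum map_mx1.
apply: big1 => s _; rewrite E_orth ?map_mx0 ?scaler0 //.
by rewrite (inj_eq (latin_col_inj latin s)).
Qed.
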